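(* Let $Q$ be a finite quiver with $kQ$ of finite GK-dimension, and let $M$ be a graded right $kQ$-module with $\dim_kM_j=1$ for all $j\gg0$. Then $\pi^*M\neq0$ if and only if there is a cyclic vertex $w$ with $\pi^*M\cong\pi^*\mathcal O_w$.
   Context: $kQ$ is the path algebra of a finite quiver over a field $k$, graded by path length. $\mathrm{QGr}\,kQ$ is the quotient of graded right modules by torsion modules (modules each of whose elements is annihilated by $(kQ)_{\ge n}$ for some $n$), with quotient functor $\pi^*$. With finite GK-dimension each cyclic vertex $v$ lies on a unique simple cycle $p=(v=v_0,a_1,\dots,a_n,v_n=v)$, and $\mathcal O_v=e_vkQ/\bigoplus p^m a_1\cdots a_i b\,kQ$ (sum over $m\ge0$, $0\le i<n$, arrows $b\neq a_{i+1}$ with source $v_i$). *)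

From HB Require Import structures.
From mathcomp Require Import all_boot all_order all_algebra.
Set Implicit Arguments. Unset Strict Implicit. Unset Printing Implicit Defensive.
Import Order.TTheory GRing.Theory Num.Theory.
Local Open Scope ring_scope.

Section Quiver.
Variables (k : fieldType) (V A : finType) (src tgt : A -> V).

(* arrows compose left to right: a then b requires tgt a = src b *)
Definition composable (a b : A) : bool := tgt a == src b.
(* s is a path starting at vertex w (the empty sequence is e_w) *)
Definition validFrom (w : V) (s : seq A) : bool :=
  (if s is a :: _ then src a == w else true) && sorted composable s.
Definition endv (w : V) (s : seq A) : V := if s is a :: s' then tgt (last a s') else w.

(* number of paths of length n in Q (the dimension of kQ_n) *)
Definition npaths (n : nat) : nat :=
  if n is 0 then #|V| else #|[pred t : n.-tuple A | sorted composable t]|.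

(* GKdim kQ < oo : with generating subspace V0 = span(e_v, arrows) (which contains 1),
   dim V0^n = number of paths of length <= n, and limsup log(dim V0^n)/log n < oo *)
Definition finite_GKdim : Prop :=
  exists d N : nat, forall n : nat, (N <= n)%N -> (\sum_(l < n.+1) npaths l <= n ^ d)%N.

(* data: homogeneous components and the right action of the generators e_v (degree 0)
   and arrows (degree 1) of kQ *)
Record grmod := GrMod {
  car : int -> lmodType k;
  ide : V -> forall j : int, car j -> car j;
  arr : A -> forall j : int, car j -> car (j + 1)
}.
Arguments ide : clear implicits.
Arguments arr : clear implicits.

(* module axioms: the action is linear and satisfies the defining relations of kQ
   (orthogonal idempotents e_v summing to 1, a = e_{src a} a e_{tgt a}) *)
Definition is_grmod (M : grmod) : Prop :=
  [/\ (forall v j (c : k) (x y : car M j), ide M v j (c *: x + y) = c *: ide M v j x + ide M v j y),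
      (forall a j (c : k) (x y : car M j), arr M a j (c *: x + y) = c *: arr M a j x + arr M a j y) &
   [/\ (forall u v j (x : car M j), ide M v j (ide M u j x) = if u == v then ide M u j x else 0),
      (forall j (x : car M j), \sum_(v : V) ide M v j x = x),
      (forall a j (x : car M j), arr M a j x = arr M a j (ide M (src a) j x)) &
      (forall a v j (x : car M j),
          ide M v (j + 1) (arr M a j x) = if v == tgt a then arr M a j x else 0)]].

Definition spred (M : grmod) := forall j : int, car M j -> Prop.

Definition submod (M : grmod) (P : spred M) : Prop :=
  [/\ (forall j, P j 0),
      (forall j (c : k) (x y : car M j), P j x -> P j y -> P j (c *: x + y)),
      (forall v j (x : car M j), P j x -> P j (ide M v j x)) &
      (forall a j (x : car M j), P j x -> P (j + 1) (arr M a j x))].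

Definition zero_spred (M : grmod) : spred M := fun j x => x = 0.

Fixpoint arrowsInto (M : grmod) (P : spred M) (m : nat) (j : int) (x : car M j) : Prop :=
  match m with
  | 0 => P j x
  | m'.+1 => forall a : A, arrowsInto P m' (arr M a j x)
  end.

(* x . p lies in P for every path p of length >= n (paths = e_v a_1 ... a_m);
   since kQ_{>=n} is spanned by these paths, this says that the class of x in M/P
   is annihilated by (kQ)_{>= n} (P a subspace) *)
Definition killed (M : grmod) (P : spred M) (n : nat) (j : int) (x : car M j) : Prop :=
  forall m : nat, (n <= m)%N -> forall v : V, arrowsInto P m (ide M v j x).

(* pi^*(M/K) ~= pi^*(N/L) in QGr kQ, for submodules K of M and L of N.
   A morphism pi^*(M/K) -> pi^*(N/L) is represented by a graded homomorphism
   f : M'/K -> N/N' with (M/K)/(M'/K) = M/M' torsion and N'/L torsion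
   (Hom_QGr = colim Hom_Gr(X', Y/Y')); it is an isomorphism iff ker f and coker f
   are torsion.  f is given by a (set-theoretic) lift M' -> N. *)
Definition QGr_iso (M : grmod) (K : spred M) (N : grmod) (L : spred N) : Prop :=
  exists (M' : spred M) (N' : spred N) (f : forall j : int, car M j -> car N j),
  [/\ [/\ submod M', (forall j x, K j x -> M' j x) &
          (forall j (x : car M j), exists n, killed M' n x)],
      [/\ submod N', (forall j y, L j y -> N' j y) &
          (forall j (y : car N j), N' j y -> exists n, killed L n y)],
      [/\ (forall j (c : k) (x y : car M j), M' j x -> M' j y ->
             N' j (f j (c *: x + y) - (c *: f j x + f j y))),
          (forall v j (x : car M j), M' j x -> N' j (f j (ide M v j x) - ide N v j (f j x))),
          (forall a j (x : car M j), M' j x ->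
             N' (j + 1) (f (j + 1) (arr M a j x) - arr N a j (f j x))) &
          (forall j (x : car M j), K j x -> N' j (f j x))],
      (forall j (x : car M j), M' j x -> N' j (f j x) -> exists n, killed K n x) &
      (forall j (y : car N j), exists n,
          killed (fun i z => exists x, M' i x /\ N' i (z - f i x)) n y)].

(* pi^* M = 0 in QGr kQ *)
Definition zero_grmod : grmod :=
  @GrMod (fun _ => 'rV[k]_0) (fun _ _ x => x) (fun _ _ _ => 0).

Definition basis (w : V) (n : nat) := {t : n.-tuple A | validFrom w t}.

Definition ekQ_car (w : V) (j : int) : lmodType k :=
  match j with
  | Posz n => {ffun basis w n -> k^o}
  | Negz _ => 'rV[k]_0
  end.

Definition coef (w : V) (j : int) : ekQ_car w j -> seq A -> k :=
  match j return ekQ_car w j -> seq A -> k with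
  | Posz n => fun x s =>
      if insub s is Some t then (if insub t is Some b then x b else 0) else 0
  | Negz _ => fun _ _ => 0
  end.

Definition mkel (w : V) (j : int) : (seq A -> k) -> ekQ_car w j :=
  match j return (seq A -> k) -> ekQ_car w j with
  | Posz n => fun F => [ffun b : basis w n => F (val (val b))]
  | Negz _ => fun _ => 0
  end.

(* e_w kQ, graded by path length, with right multiplication *)
Definition ekQ (w : V) : grmod :=
  @GrMod (ekQ_car w)
    (fun v j x => mkel w j (fun s => if endv w s == v then coef x s else 0))
    (fun a j x => mkel w (j + 1) (fun s =>
        match rev s with
        | a' :: r => if a' == a then coef x (rev r) else 0
        | [::] => 0
        end)).

Definition simple_cycle (w : V) (p : seq A) : bool :=
  [&& p != [::], validFrom w p, endv w p == w & uniq (map src p)].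

(* paths in the right ideal  sum_{m, i, b} p^m a_1 ... a_i b kQ
   (0 <= i < n, b an arrow with source v_i, b <> a_{i+1}) *)
Definition in_gen_ideal (p : seq A) (s : seq A) : Prop :=
  exists (m i : nat) (b : A) (q : seq A),
    [/\ (i < size p)%N, src b = src (nth b p i), b != nth b p i &
        s = flatten (nseq m p) ++ take i p ++ b :: q].

(* the monomial right ideal: spanned by those paths *)
Definition O_ideal (w : V) (p : seq A) : spred (ekQ w) :=
  fun j x => forall s, coef x s != 0 -> in_gen_ideal p s.

(* O_w = e_w kQ / O_ideal w p, presented as the pair (ekQ w, O_ideal w p) *)

End Quiver.

From HB Require Import structures.
From mathcomp Require Import all_boot all_order all_algebra.
From mathcomp Require Import zify.
From Stdlib Require Import ClassicalEpsilon.
Set Implicit Arguments. Unset Strict Implicit. Unset Printing Implicit Defensive.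
Import Order.TTheory GRing.Theory Num.Theory.
Local Open Scope ring_scope.

(** If [pi^* M] is isomorphic to [pi^* O_w] then it is nonzero, because [O_w] is not torsion:
    the paths outside the monomial ideal defining [O_w] are exactly the prefixes of the infinite
    word [p^oo], so [e_w] has coefficient 1 on a prefix of [p^oo] however far it is pushed along
    [p^oo]; chasing it along this single ray through the zigzags that represent the two
    isomorphisms in [QGr kQ] contradicts torsion.

    Conversely, let [b_j] span [M_j] for [j >> 0].  If infinitely many [b_j] are killed by every
    arrow, [M] is torsion.  Otherwise [b_j = b_j e_(v_j)] and [b_j a_j <> 0] for an arrow [a_j]
    from [v_j] to [v_(j+1)], an infinite walk in [Q].  Finite GK-dimension forbids two distinct
    cycles through one vertex (they would produce [2^m] paths of length [m L]), so the arrow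
    leaving a vertex that the walk visits infinitely often is determined by the vertex.  Hence
    the walk is eventually periodic, its period is a simple cycle [p] at some [w], and sending
    a suitable rescaling of [b_j] to the prefix of [p^oo] of length [j] is an isomorphism from
    the tail of [M] to [O_w] modulo torsion. *)

Section Paths.
Variables (V A : finType) (src tgt : A -> V).

Fixpoint path_from (u : V) (s : seq A) : bool :=
  if s is a :: s' then (src a == u) && path_from (tgt a) s' else true.

Lemma validFromE u s : validFrom src tgt u s = path_from u s.
Proof.
elim: s u => [|a s IH] u //=.
rewrite /validFrom /= -IH /validFrom.
case: s {IH} => [|b s] /=; first by rewrite !andbT.
by rewrite /composable [tgt a == _]eq_sym.
Qed.

Lemma endv_cons u a s : endv tgt u (a :: s) = endv tgt (tgt a) s.
Proof. by case: s. Qed.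

Lemma path_from_cat u s t :
  path_from u (s ++ t) = path_from u s && path_from (endv tgt u s) t.
Proof.
elim: s u => [|a s IH] u //=.
by rewrite IH; case: s {IH} => [|b s]; rewrite andbA.
Qed.

Lemma endv_cat u s t : endv tgt u (s ++ t) = endv tgt (endv tgt u s) t.
Proof. by elim: s u => [|a s IH] u //; rewrite cat_cons !endv_cons IH. Qed.

Lemma path_from_rcons u s a :
  path_from u (rcons s a) = path_from u s && (src a == endv tgt u s).
Proof. by rewrite -cats1 path_from_cat /= andbT. Qed.

Lemma endv_rcons u s a : endv tgt u (rcons s a) = tgt a.
Proof. by rewrite -cats1 endv_cat. Qed.

Lemma flatten_nseqSr (s : seq A) q : flatten (nseq q.+1 s) = flatten (nseq q s) ++ s.
Proof.
elim: q => [|q IH]; first by rewrite /= cats0.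
change (s ++ flatten (nseq q.+1 s) = flatten (nseq q.+1 s) ++ s).
by rewrite {1}IH catA.
Qed.

Lemma size_flatten_nseq (s : seq A) q : size (flatten (nseq q s)) = (q * size s)%N.
Proof. by elim: q => //= q IH; rewrite size_cat IH mulSn. Qed.

Lemma closed_path_flatten_nseq u s q : path_from u s -> endv tgt u s = u ->
  path_from u (flatten (nseq q s)) /\ endv tgt u (flatten (nseq q s)) = u.
Proof.
move=> Hs Es; elim: q => [|q [IH1 IH2]] //=.
by rewrite path_from_cat Hs Es IH1 endv_cat Es IH2.
Qed.

End Paths.

Section EkQ.
Variables (k : fieldType) (V A : finType) (src tgt : A -> V) (w : V).
Local Notation E := (ekQ k src tgt w).

Lemma coef_mkel j (F : seq A -> k) s :
  coef (mkel src tgt w j F) s =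
  if (Posz (size s) == j) && validFrom src tgt w s then F s else 0.
Proof.
case: j => [n|n] //=.
case: insubP => [t Ht Hts|Hs]; last by rewrite eqz_nat (negbTE Hs).
case: insubP => [b Hb Hbt|Hb]; last by rewrite -Hts (negbTE Hb) andbF.
by rewrite ffunE Hbt Hts -(eqP Ht) eqxx -Hts Hb.
Qed.

Lemma mkel_coef j (x : car E j) : x = mkel src tgt w j (coef x).
Proof.
case: j x => [n|n] x /=; last by rewrite [x]thinmx0.
by apply/ffunP => b; rewrite ffunE !valK.
Qed.

Lemma ekQ_ext j (x y : car E j) : coef x =1 coef y -> x = y.
Proof.
move=> H; rewrite (mkel_coef x) (mkel_coef y).
by case: j x y H => [n|n] x y H //=; apply/ffunP => b; rewrite !ffunE; apply: H.
Qed.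

Lemma coef_supp j (x : car E j) s :
  coef x s != 0 -> (Posz (size s) == j) && validFrom src tgt w s.
Proof. by rewrite {1}(mkel_coef x) coef_mkel; case: ifP => //; rewrite eqxx. Qed.

Lemma ecoefD j (c : k) (x y : car E j) s :
  coef (c *: x + y) s = c * coef x s + coef y s.
Proof.
case: j x y => [n|n] x y /=; last by rewrite mulr0 addr0.
case: insubP => [t _ _|_]; last by rewrite mulr0 addr0.
case: insubP => [b _ _|_]; last by rewrite mulr0 addr0.
by rewrite !ffunE.
Qed.

Lemma ecoef0 j s : coef (0 : car E j) s = 0.
Proof.
case: j => [n|n] //=.
by case: insubP => // t _ _; case: insubP => // b _ _; rewrite ffunE.
Qed.

Lemma ecoefZ j (c : k) (x : car E j) s : coef (c *: x) s = c * coef x s.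
Proof. by rewrite -[c *: x]addr0 ecoefD ecoef0 addr0. Qed.

Lemma ecoefB j (x y : car E j) s : coef (x - y) s = coef x s - coef y s.
Proof. by rewrite addrC -scaleN1r ecoefD mulN1r addrC. Qed.

Lemma coef_ide v j (x : car E j) s :
  coef (ide v x) s = if endv tgt w s == v then coef x s else 0.
Proof.
rewrite /= coef_mkel; case: ifP => // /negbT Hs; case: ifP => // _.
by case: (coef x s =P 0) => // /eqP /coef_supp; rewrite (negbTE Hs).
Qed.

Lemma coef_arr a j (x : car E j) s :
  coef (arr a x) s =
  if (Posz (size s) == j + 1) && validFrom src tgt w s then
    (match rev s with a' :: r => if a' == a then coef x (rev r) else 0 | [::] => 0 end)
  else 0.
Proof. exact: coef_mkel. Qed.

Lemma coef_arr_rcons a j (x : car E j) r b :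
  validFrom src tgt w (rcons r b) ->
  coef (arr a x) (rcons r b) = if b == a then coef x r else 0.
Proof.
move=> Hv; rewrite coef_arr Hv andbT rev_rcons revK size_rcons.
case: ifP => [//|/negbT Hs]; case: ifP => // _.
case: (coef x r =P 0) => // /eqP /coef_supp /andP[/eqP Hr _]; lia.
Qed.

Lemma ekQ_arrD a j (c : k) (x y : car E j) : arr a (c *: x + y) = c *: arr a x + arr a y.
Proof.
apply: ekQ_ext => s; rewrite ecoefD !coef_arr.
case: ifP => _; last by rewrite mulr0 addr0.
case: (rev s) => [|a' r]; first by rewrite mulr0 addr0.
by case: ifP => _; rewrite ?ecoefD // mulr0 addr0.
Qed.

Lemma ekQ_arrB a j (x y : car E j) : arr a (x - y) = arr a x - arr a y.
Proof. by rewrite [x - y]addrC -[- y]scaleN1r ekQ_arrD scaleN1r [RHS]addrC. Qed.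

Lemma ekQ_arr0 a j : arr a (0 : car E j) = 0.
Proof. by rewrite -(subrr 0) ekQ_arrB subrr. Qed.

Lemma ekQ_arr_ide a j (x : car E j) : arr a x = arr a (ide (src a) x).
Proof.
apply: ekQ_ext => s; rewrite !coef_arr; case: ifP => // /andP[_].
rewrite -[s]revK; case: (rev s) => [//|a' r]; rewrite revK rev_cons.
case: (eqVneq a' a) => [->|] //.
by rewrite validFromE path_from_rcons coef_ide eq_sym => /andP[_ ->].
Qed.

End EkQ.

Section Along.
Variables (k : fieldType) (V A : finType) (M : grmod k V A).

Fixpoint along (P : spred M) (s : seq A) (j : int) (x : car M j) : Prop :=
  if s is a :: s' then along P s' (arr a x) else P j x.

Lemma arrowsInto_along (P : spred M) s j (x : car M j) :
  arrowsInto P (size s) x -> along P s x.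
Proof. by elim: s j x => [|a s IH] j x //= H; apply: IH. Qed.

Lemma along_arrowsInto (P : spred M) m j (x : car M j) :
  (forall s, size s = m -> along P s x) -> arrowsInto P m x.
Proof.
elim: m j x => [|m IH] j x H /=; first exact: (H [::]).
by move=> a; apply: IH => s Hs; apply: (H (a :: s)); rewrite /= Hs.
Qed.

Lemma along_deg (P : spred M) s j (x : car M j) :
  (forall i y, i = j + Posz (size s) -> P i y) -> along P s x.
Proof.
elim: s j x => [|a s IH] j x H /=; first by apply: H; rewrite addr0.
by apply: IH => i y Hi; apply: H; rewrite Hi /=; lia.
Qed.

Lemma along_cat (P : spred M) s t j (x : car M j) :
  along P (s ++ t) x <-> along (fun i y => along P t y) s x.
Proof. by elim: s j x => [|a s IH] j x /=. Qed.

End Along.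

Lemma killed_deg (k : fieldType) (V A : finType) (M : grmod k V A) (P : spred M) n j (x : car M j) :
  (forall i (y : car M i), j + Posz n <= i -> P i y) -> killed P n x.
Proof.
move=> H m Hm v; apply: along_arrowsInto => s Hs.
by apply: along_deg => i y Hi; apply: H; rewrite Hi; lia.
Qed.

Lemma killed_along_cons (k : fieldType) (V A : finType) (src : A -> V)
    (M : grmod k V A) (HarrI : forall a j (x : car M j), arr a x = arr a (ide (src a) x))
    (P : spred M) n j (y : car M j) b s :
  (n <= (size s).+1)%N -> killed P n y -> along P (b :: s) y.
Proof.
move=> Hn /(_ _ Hn (src b)) H.
by have /= := arrowsInto_along (s := b :: s) H; rewrite -HarrI.
Qed.

Section Along2.
Variables (k : fieldType) (V A : finType) (M N : grmod k V A).

Fixpoint along2 (P : forall j, car M j -> car N j -> Prop)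
    (s : seq A) (j : int) (x : car M j) (y : car N j) : Prop :=
  if s is a :: s' then along2 P s' (arr a x) (arr a y) else P j x y.

Lemma along2_alongl (P : spred M) s j (x : car M j) (y : car N j) :
  along P s x -> along2 (fun i x _ => P i x) s x y.
Proof. by elim: s j x y => [|a s IH] j x y //=; apply: IH. Qed.

Lemma along2_alongr (P : spred N) s j (x : car M j) (y : car N j) :
  along P s y -> along2 (fun i _ y => P i y) s x y.
Proof. by elim: s j x y => [|a s IH] j x y //=; apply: IH. Qed.

Lemma along2_inv (R : forall j, car M j -> car N j -> Prop) s j x y :
  (forall a i x y, R i x y -> R (i + 1) (arr a x) (arr a y)) ->
  R j x y -> along2 R s x y.
Proof. by move=> H; elim: s j x y => [|a s IH] j x y //= Hr; apply: IH; apply: H. Qed.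

Lemma along2_and (P Q : forall j, car M j -> car N j -> Prop) s j x y :
  along2 P s x y -> along2 Q s x y ->
  @along2 (fun i x y => P i x y /\ Q i x y) s j x y.
Proof. by elim: s j x y => [|a s IH] j x y /=; [split | apply: IH]. Qed.

Lemma along2_end (P : forall j, car M j -> car N j -> Prop) s j x y :
  @along2 P s j x y -> exists i x' y', P i x' y'.
Proof. by elim: s j x y => [|a s IH] j x y /=; [exists j, x, y | apply: IH]. Qed.

End Along2.

Section GradedModule.
Variables (k : fieldType) (V A : finType) (src tgt : A -> V) (M : grmod k V A).
Hypothesis hM : is_grmod src tgt M.

Lemma ideD v j (c : k) (x y : car M j) :
  ide v (c *: x + y) = c *: ide v x + ide v y.
Proof. by case: hM. Qed.

Lemma arrD a j (c : k) (x y : car M j) :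
  arr a (c *: x + y) = c *: arr a x + arr a y.
Proof. by case: hM. Qed.

Lemma ide_ide u v j (x : car M j) :
  ide v (ide u x) = if u == v then ide u x else 0.
Proof. by case: hM => _ _ []. Qed.

Lemma sum_ide j (x : car M j) : \sum_(v : V) ide v x = x.
Proof. by case: hM => _ _ []. Qed.

Lemma arr_ide a j (x : car M j) : arr a x = arr a (ide (src a) x).
Proof. by case: hM => _ _ []. Qed.

Lemma ide_arr a v j (x : car M j) :
  ide v (arr a x) = if v == tgt a then arr a x else 0.
Proof. by case: hM => _ _ []. Qed.

Lemma ide0 v j : ide v (0 : car M j) = 0.
Proof.
have := ideD v 1 (0 : car M j) 0; rewrite !scale1r addr0 => /(congr1 (fun z => z - ide v 0)).
by rewrite subrr addrK.
Qed.

Lemma arr0 a j : arr a (0 : car M j) = 0.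
Proof.
have := arrD a 1 (0 : car M j) 0; rewrite !scale1r addr0 => /(congr1 (fun z => z - arr a 0)).
by rewrite subrr addrK.
Qed.

Lemma ideZ v j (c : k) (x : car M j) : ide v (c *: x) = c *: ide v x.
Proof. by rewrite -[c *: x]addr0 ideD ide0 addr0. Qed.

Lemma arrZ a j (c : k) (x : car M j) : arr a (c *: x) = c *: arr a x.
Proof. by rewrite -[c *: x]addr0 arrD arr0 addr0. Qed.

Lemma zero_submod : submod (@zero_spred _ _ _ M).
Proof.
split => //=.
- by move=> j c x y -> ->; rewrite scaler0 addr0.
- by move=> v j x ->; rewrite ide0.
- by move=> a j x ->; rewrite arr0.
Qed.

Lemma along_zero s j : along (@zero_spred _ _ _ M) s (0 : car M j).
Proof. by elim: s j => [|a s IH] j //=; rewrite arr0. Qed.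

End GradedModule.

Section Submodule.
Variables (k : fieldType) (V A : finType) (M : grmod k V A) (P : spred M).
Hypothesis hP : submod P.

Lemma submod_add j (x y : car M j) : P x -> P y -> P (x + y).
Proof. by case: hP => _ Hl _ _ Hx Hy; have := Hl j 1 _ _ Hx Hy; rewrite scale1r. Qed.

Lemma submod_opp j (x : car M j) : P x -> P (- x).
Proof. by case: hP => H0 Hl _ _ Hx; have := Hl j (-1) x 0 Hx (H0 j); rewrite addr0 scaleN1r. Qed.

Lemma submod_sub_trans j (x y z : car M j) : P (x - y) -> P (y - z) -> P (x - z).
Proof. by move=> H1 H2; have := submod_add H1 H2; rewrite addrA subrK. Qed.

Lemma submod_killed n j (x : car M j) : P x -> killed P n x.
Proof.
case: hP => _ _ Hi Ha Hx m _ v; move: {Hx}(Hi v j x Hx); move: (ide v x) => y.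
by elim: m j y {x} => [|m IH] j y //= Hy a; apply/IH/Ha.
Qed.

End Submodule.

Section Cycle.
Variables (V A : finType) (src tgt : A -> V) (w : V) (x0 : A) (p : seq A).

Definition cycle_arrow (i : nat) : A := nth x0 p (i %% size p).

Fixpoint cycle_prefix (l : nat) : seq A :=
  if l is l'.+1 then rcons (cycle_prefix l') (cycle_arrow l') else [::].

Fixpoint cycle_ray (l n : nat) : seq A :=
  if n is n'.+1 then cycle_arrow l :: cycle_ray l.+1 n' else [::].

Lemma size_cycle_prefix l : size (cycle_prefix l) = l.
Proof. by elim: l => //= l IH; rewrite size_rcons IH. Qed.

Lemma size_cycle_ray l n : size (cycle_ray l n) = n.
Proof. by elim: n l => //= n IH l; rewrite IH. Qed.

Lemma nth_cycle_prefix l i : (i < l)%N -> nth x0 (cycle_prefix l) i = cycle_arrow i.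
Proof.
elim: l => // l IH Hi /=; rewrite nth_rcons size_cycle_prefix.
by case: (ltngtP i l) => H; [rewrite IH | lia | rewrite H].
Qed.

Lemma cycle_prefix_notin_ideal l : ~ in_gen_ideal src p (cycle_prefix l).
Proof.
move=> [m [i [b [q [Hi _ Hb Hs]]]]].
have Hpos : (m * size p + i < l)%N.
  have := size_cycle_prefix l.
  rewrite Hs !size_cat size_flatten_nseq size_take Hi /=; lia.
have := nth_cycle_prefix Hpos; rewrite Hs nth_cat size_flatten_nseq ifF; last by lia.
rewrite addKn nth_cat size_take Hi ltnn subnn /= /cycle_arrow modnMDl modn_small // => Eb.
by move: Hb; rewrite Eb (set_nth_default x0) // eqxx.
Qed.

Hypothesis p_neq0 : (0 < size p)%N.
Hypothesis p_path : path_from src tgt w p.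
Hypothesis p_closed : endv tgt w p = w.

Lemma cycle_prefixE l :
  cycle_prefix l = flatten (nseq (l %/ size p) p) ++ take (l %% size p) p.
Proof.
elim: l => [|l IH]; first by rewrite div0n mod0n /= take0.
rewrite /= IH rcons_cat -take_nth ?ltn_pmod // modnS divnS //.
case: ifP => Hd /=; last by rewrite add0n.
rewrite take0 cats0 add0n take_oversize -?flatten_nseqSr //.
have Hr : (size p %| (l %% size p).+1)%N.
  move: Hd; rewrite {1}(divn_eq l (size p)) -addnS dvdn_addr //; exact: dvdn_mull.
exact: dvdn_leq Hr.
Qed.

Lemma path_from_cycle_prefix l : path_from src tgt w (cycle_prefix l).
Proof.
rewrite cycle_prefixE path_from_cat.
have [-> ->] := closed_path_flatten_nseq (l %/ size p) p_path p_closed.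
by move: p_path; rewrite -{1}(cat_take_drop (l %% size p) p) path_from_cat => /andP[].
Qed.

Lemma endv_cycle_prefix l : endv tgt w (cycle_prefix l) = src (cycle_arrow l).
Proof. by have /= := path_from_cycle_prefix l.+1; rewrite path_from_rcons => /andP[_ /eqP]. Qed.

Lemma in_ideal_of_neq_cycle_prefix s :
  path_from src tgt w s -> s != cycle_prefix (size s) -> in_gen_ideal src p s.
Proof.
elim/last_ind: s => [|s a IH]; first by rewrite eqxx.
rewrite path_from_rcons => /andP[Hs /eqP Ha] Hne.
case: (eqVneq s (cycle_prefix (size s))) => Es; last first.
  have [m [i [b [q [Hi Hsb Hb E]]]]] := IH Hs Es.
  by exists m, i, b, (rcons q a); split => //; rewrite E !rcons_cat.
have Hr : (size s %% size p < size p)%N by rewrite ltn_pmod.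
exists (size s %/ size p)%N, (size s %% size p)%N, a, [::]; split => //.
- by rewrite (set_nth_default x0) // Ha Es endv_cycle_prefix size_cycle_prefix.
- rewrite (set_nth_default x0) //; apply: contraNneq Hne => ->.
  by rewrite size_rcons /= -Es.
- by rewrite catA -cycle_prefixE -Es cats1.
Qed.

End Cycle.

Section CycleModule.
Variables (k : fieldType) (V A : finType) (src tgt : A -> V) (w : V) (x0 : A) (p : seq A).
Hypothesis p_neq0 : (0 < size p)%N.
Hypothesis p_path : path_from src tgt w p.
Hypothesis p_closed : endv tgt w p = w.

Local Notation E := (ekQ k src tgt w).
Local Notation prefix := (cycle_prefix x0 p).
Local Notation arrow := (cycle_arrow x0 p).
Local Notation Ow := (O_ideal (k := k) (src := src) (tgt := tgt) (w := w) p).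

Lemma O_idealP j (z : car E j) : Ow z <-> forall l, coef z (prefix l) = 0.
Proof.
split=> [H l | H s Hs].
  by apply/eqP; case: eqP => // /eqP /H /cycle_prefix_notin_ideal.
have /andP[_] := coef_supp Hs; rewrite validFromE => Hv.
apply: (in_ideal_of_neq_cycle_prefix (x0 := x0) p_neq0 p_path p_closed Hv).
by apply: contra Hs => /eqP ->; rewrite H.
Qed.

Lemma O_ideal_subP j (z1 z2 : car E j) :
  Ow (z1 - z2) <-> forall l, coef z1 (prefix l) = coef z2 (prefix l).
Proof.
rewrite O_idealP; split=> H l; last by rewrite ecoefB H subrr.
by apply/eqP; rewrite -subr_eq0 -ecoefB H.
Qed.

Lemma coef_ide_prefix v j (z : car E j) l :
  coef (ide v z) (prefix l) = if src (arrow l) == v then coef z (prefix l) else 0.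
Proof. by rewrite coef_ide (endv_cycle_prefix x0 p_neq0 p_path p_closed). Qed.

Lemma coef_arr_prefixS a j (z : car E j) l :
  coef (arr a z) (prefix l.+1) = if arrow l == a then coef z (prefix l) else 0.
Proof.
by rewrite coef_arr_rcons // validFromE -[rcons _ _]/(prefix l.+1) path_from_cycle_prefix.
Qed.

Lemma coef_arr_prefix0 a j (z : car E j) : coef (arr a z) (prefix 0) = 0.
Proof. by rewrite coef_arr /=; case: ifP. Qed.

Lemma O_ideal_submod : submod Ow.
Proof.
split.
- by move=> j; apply/O_idealP => l; rewrite ecoef0.
- move=> j c x y /O_idealP Hx /O_idealP Hy.
  by apply/O_idealP => l; rewrite ecoefD Hx Hy mulr0 addr0.
- by move=> v j x /O_idealP Hx; apply/O_idealP => l; rewrite coef_ide_prefix Hx if_same.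
- move=> a j x /O_idealP Hx; apply/O_idealP => -[|l]; first by rewrite coef_arr_prefix0.
  by rewrite coef_arr_prefixS Hx if_same.
Qed.

Definition cycle_elt j : car E j :=
  mkel src tgt w j (fun s => if s == prefix (size s) then 1 else 0).

Lemma coef_cycle_elt j l : coef (cycle_elt j) (prefix l) = (Posz l == j)%:R.
Proof.
rewrite coef_mkel size_cycle_prefix validFromE path_from_cycle_prefix // andbT eqxx.
by case: eqP.
Qed.

Definition hits_cycle i (z : car E i) := exists l, i = Posz l /\ coef z (prefix l) = 1.

Lemma along_hits_cycle l n j (z : car E j) :
  j = Posz l -> coef z (prefix l) = 1 -> along hits_cycle (cycle_ray x0 p l n) z.
Proof.
elim: n l j z => [|n IH] l j z Hj Hz /=; first by exists l.
by apply: (IH l.+1); [rewrite Hj; lia | rewrite coef_arr_prefixS eqxx].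
Qed.

End CycleModule.

(** * [O_w] is not torsion *)

Lemma QGr_iso_zero_torsion (k : fieldType) (V A : finType) (M : grmod k V A) :
  QGr_iso (@zero_spred _ _ _ M) (@zero_spred _ _ _ (zero_grmod k V A)) ->
  exists M0 : spred M, (forall j (x : car M j), exists n, killed M0 n x) /\
    (forall j (x : car M j), M0 j x -> exists n, killed (@zero_spred _ _ _ M) n x).
Proof.
case=> M0 [N0 [f0 [[_ _ HM0] [[N0_0 _ _ _] _ _] _ Hker _]]].
by exists M0; split=> // j x Hx; apply: Hker Hx _; rewrite [f0 j x]thinmx0; apply: N0_0.
Qed.

(* Torsion is only ever tested along the single ray [p^oo] from a prefix of it, so no bound
   uniform over the (finitely but arbitrarily many) paths of a given length is needed. *)
Section CycleChase.
Variables (k : fieldType) (V A : finType) (src tgt : A -> V) (w : V) (x0 : A) (p : seq A).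
Hypothesis p_neq0 : (0 < size p)%N.
Hypothesis p_path : path_from src tgt w p.
Hypothesis p_closed : endv tgt w p = w.
Variables (M : grmod k V A).
Hypothesis hM : is_grmod src tgt M.

Local Notation E := (ekQ k src tgt w).
Local Notation prefix := (cycle_prefix x0 p).
Local Notation ray := (cycle_ray x0 p).
Local Notation hits := (hits_cycle x0 p).

Variable R : forall i, car M i -> car E i -> Prop.
Hypothesis R_arr : forall a i (x : car M i) (z : car E i), R x z -> R (arr a x) (arr a z).

Lemma cycle_chase (P : forall i, car M i -> car E i -> Prop) l n j (x : car M j) (z : car E j) :
  j = Posz l -> coef z (prefix l) = 1 -> R x z -> along2 P (ray l n) x z ->
  exists i x' z', [/\ P i x' z', R x' z' & hits z'].
Proof.
move=> Hj Hz HR HP.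
have HR' := along2_inv (ray l n) R_arr HR.
have Hh := along2_alongr x (along_hits_cycle p_neq0 p_path p_closed n Hj Hz).
have [i [x' [z' [[? ?] ?]]]] := along2_end (along2_and (along2_and HP HR') Hh).
by exists i, x', z'.
Qed.

Lemma cycle_chase_killedl (P : spred M) n l j (x : car M j) (z : car E j) :
  j = Posz l -> coef z (prefix l) = 1 -> R x z -> killed P n x ->
  exists i x' z', [/\ P i x', R x' z' & hits z'].
Proof.
move=> Hj Hz HR Hk; have HP : along P (ray l n.+1) x.
  by apply: (killed_along_cons (arr_ide hM)) Hk; rewrite size_cycle_ray.
exact: (cycle_chase Hj Hz HR (along2_alongl z HP)).
Qed.

Lemma cycle_chase_killedr (P : spred E) n l j (x : car M j) (z : car E j) :
  j = Posz l -> coef z (prefix l) = 1 -> R x z -> killed P n z ->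
  exists i x' z', [/\ P i z', R x' z' & hits z'].
Proof.
move=> Hj Hz HR Hk; have HP : along P (ray l n.+1) z.
  by apply: (killed_along_cons (@ekQ_arr_ide _ _ _ _ _ _)) Hk; rewrite size_cycle_ray.
exact: (cycle_chase Hj Hz HR (along2_alongr x HP)).
Qed.

End CycleChase.

Lemma graph_mod_arr (k : fieldType) (V A : finType) (src tgt : A -> V) (w : V)
    (M : grmod k V A) (M1 : spred M) (N1 : spred (ekQ k src tgt w))
    (f : forall j, car M j -> car (ekQ k src tgt w) j) :
  submod M1 -> submod N1 ->
  (forall a j (x : car M j), M1 j x -> N1 (j + 1) (f (j + 1) (arr a x) - arr a (f j x))) ->
  forall a i (x : car M i) (z : car (ekQ k src tgt w) i),
  M1 i x /\ N1 i (z - f i x) -> M1 (i + 1) (arr a x) /\ N1 (i + 1) (arr a z - f (i + 1) (arr a x)).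
Proof.
move=> HM1 HN1 Hfarr a i x z [Hx Hz]; split; first by case: HM1 => _ _ _; apply.
apply: (submod_sub_trans HN1 (y := arr a (f i x))).
  by rewrite -ekQ_arrB; case: HN1 => _ _ _; apply.
by rewrite -opprB; apply/(submod_opp HN1)/Hfarr.
Qed.

Lemma QGr_iso_cycle_not_torsion (k : fieldType) (V A : finType) (src tgt : A -> V)
    (M : grmod k V A) (hM : is_grmod src tgt M) (w : V) (p : seq A) :
  simple_cycle src tgt w p ->
  QGr_iso (@zero_spred _ _ _ M) (O_ideal (src := src) (tgt := tgt) (w := w) p) ->
  ~ QGr_iso (@zero_spred _ _ _ M) (@zero_spred _ _ _ (zero_grmod k V A)).
Proof.
move=> /and4P[p_nil p_valid /eqP p_closed _] HisoO /QGr_iso_zero_torsion[M0 [HM0 HM0t]].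
have [x0 p_neq0] : A * (0 < size p)%N by case: p p_nil {p_valid p_closed HisoO} => // a.
have p_path : path_from src tgt w p by rewrite -validFromE.
set E := ekQ k src tgt w.
case: HisoO => M1 [N1 [f [[HM1 _ _] [HN1 _ HN1t] [_ _ Hfarr Hf0] _ Hcok]]].
have R_arr := graph_mod_arr HM1 HN1 Hfarr.
(* Push [e_w] along [p^oo] into the image of [f] mod [N1], then into [M0], then to [0] (so into
   [N1]), then into [O_w]; the coefficient 1 on a prefix of [p^oo] survives all four steps. *)
pose T i (x : car M i) (z : car E i) := True.
have [n1 Hn1] := Hcok 0 (cycle_elt k src tgt w x0 p 0).
have [i1 [_ [z1 [[x1 [Hx1 Hz1]] _ [l1 [Hi1 Hc1]]]]]] :=
  cycle_chase_killedr p_neq0 p_path p_closed (R := T) (fun _ _ _ _ _ => I)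
    (l := 0) (x := 0 : car M 0) (erefl _)
    (coef_cycle_elt k x0 p_neq0 p_path p_closed 0 0) I Hn1.
have [n2 Hn2] := HM0 _ x1.
have [i2 [x2 [z2 [Hx2 [HM1x2 HN1z2] [l2 [Hi2 Hc2]]]]]] :=
  cycle_chase_killedl p_neq0 p_path p_closed hM R_arr Hi1 Hc1 (conj Hx1 Hz1) Hn2.
have [n3 Hn3] := HM0t _ _ Hx2.
have [i3 [x3 [z3 [Hx3 [_ HN1z3] [l3 [Hi3 Hc3]]]]]] :=
  cycle_chase_killedl p_neq0 p_path p_closed hM R_arr Hi2 Hc2 (conj HM1x2 HN1z2) Hn3.
have Hz3 : N1 i3 z3.
  by move: HN1z3; rewrite Hx3 => /(submod_add HN1)/(_ (Hf0 _ _ (erefl _))); rewrite subrK.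
have [n4 Hn4] := HN1t _ _ Hz3.
have [i4 [_ [z4 [HO _ [l4 [_ Hc4]]]]]] :=
  cycle_chase_killedr p_neq0 p_path p_closed (R := T) (fun _ _ _ _ _ => I)
    (x := 0 : car M i3) Hi3 Hc3 I Hn4.
move: Hc4; rewrite ((O_idealP _ p_neq0 p_path p_closed z4).1 HO l4).
by move/eqP; rewrite eq_sym oner_eq0.
Qed.

(** * Finite GK-dimension forbids branching *)

Lemma flatten_blocks_inj (T : eqType) (s1 s2 : seq T) :
  size s1 = size s2 -> s1 != s2 ->
  forall bs1 bs2 : seq bool, size bs1 = size bs2 ->
  flatten [seq if x then s1 else s2 | x <- bs1] =
  flatten [seq if x then s1 else s2 | x <- bs2] -> bs1 = bs2.
Proof.
move=> Hs Hne; pose blk (x : bool) := if x then s1 else s2.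
have Hblk x : size (blk x) = size s1 by case: x.
elim=> [|x r1 IH] [|y r2] //= [Hr] E.
have Exy : blk x = blk y.
  have := congr1 (take (size s1)) E.
  by rewrite -{1}(Hblk x) take_size_cat // -(Hblk y) take_size_cat.
have Exy' : x = y.
  by move: Exy {E}; rewrite /blk; case: x; case: y => // Eq; move: Hne; rewrite Eq eqxx.
subst y; congr (_ :: _); apply: IH Hr _.
have := congr1 (drop (size s1)) E.
by rewrite drop_size_cat ?drop_size_cat //; apply: Hblk.
Qed.

Lemma exists_pow2_gt_poly L d N : (0 < L)%N ->
  exists m, [/\ (0 < m)%N, (N <= m * L)%N & ((m * L) ^ d < 2 ^ m)%N].
Proof.
move=> HL; pose c := (N + d + L * d)%N.
have e1 x : (x < 2 ^ x)%N by apply: ltn_expl.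
have e2 : (c * (4 * c) + c < 2 ^ (4 * c))%N.
  have h2 := leq_mul (e1 (2 * c)%N) (e1 (2 * c)%N).
  rewrite -expnD in h2.
  have -> : (4 * c = 2 * c + 2 * c)%N by lia.
  by apply: leq_trans h2; nia.
pose r := (4 * c)%N.
exists (2 ^ r)%N; split.
- by rewrite expn_gt0.
- by have := e1 r; rewrite /r /c; nia.
- rewrite expnMn -expnM.
  have hL : (L ^ d <= 2 ^ (L * d))%N.
    by rewrite expnM; elim: (d) => // e IH; rewrite !expnS leq_mul // ltnW.
  apply: (leq_ltn_trans (leq_mul (leqnn _) hL)).
  rewrite -expnD ltn_exp2l //.
  have hd : (r * d + L * d <= c * r + c)%N by rewrite /c /r; nia.
  by apply: leq_ltn_trans hd _; rewrite /r.
Qed.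

Section Branching.
Variables (V A : finType) (src tgt : A -> V).

Lemma pow2_le_npaths u (s1 s2 : seq A) m :
  path_from src tgt u s1 -> endv tgt u s1 = u ->
  path_from src tgt u s2 -> endv tgt u s2 = u ->
  size s1 = size s2 -> s1 != s2 -> (0 < m * size s1)%N ->
  (2 ^ m <= npaths src tgt (m * size s1))%N.
Proof.
move=> P1 E1 P2 E2 Hs Hne.
pose word (bs : seq bool) := flatten [seq if x then s1 else s2 | x <- bs].
have Hw bs : path_from src tgt u (word bs) /\ endv tgt u (word bs) = u.
  elim: bs => [|x bs [IH1 IH2]] //=; rewrite path_from_cat endv_cat.
  by case: x; rewrite ?P1 ?E1 ?P2 ?E2.
have Hsw bs : size (word bs) = (size bs * size s1)%N.
  by elim: bs => [|x bs IH] //=; rewrite size_cat IH mulSn; case: x; rewrite ?Hs.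
case Em: (m * size s1)%N => [//|n] _.
have [a _] : {a : A | true}.
  by case: (s1) Em => [|a ?]; [rewrite muln0 | exists a].
pose F (bs : m.-tuple bool) := insubd (nseq_tuple n.+1 a) (word bs) : n.+1.-tuple A.
have HF (bs : m.-tuple bool) : val (F bs) = word bs.
  by rewrite val_insubd Hsw size_tuple Em eqxx.
have Finj : injective F.
  move=> x y Exy; apply: val_inj; apply: (flatten_blocks_inj Hs Hne); first by rewrite !size_tuple.
  by rewrite -!/(word _) -!HF Exy.
have <- : #|F @: setT| = (2 ^ m)%N by rewrite card_imset // cardsT card_tuple card_bool.
rewrite /npaths; apply: subset_leq_card; apply/subsetP => t /imsetP [bs _ ->].
by rewrite inE /= HF; have := (Hw bs).1; rewrite -validFromE => /andP[].
Qed.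

Hypothesis hGK : finite_GKdim src tgt.

Lemma no_branching u a b s1 s2 : a != b -> src a = u -> src b = u ->
  path_from src tgt (tgt a) s1 -> endv tgt (tgt a) s1 = u ->
  path_from src tgt (tgt b) s2 -> endv tgt (tgt b) s2 = u -> False.
Proof.
move=> Hab Ha Hb P1 E1 P2 E2.
pose c1 := a :: s1; pose c2 := b :: s2.
have Pc1 : path_from src tgt u c1 by rewrite /= Ha eqxx P1.
have Pc2 : path_from src tgt u c2 by rewrite /= Hb eqxx P2.
have [Pw1 Ew1] := closed_path_flatten_nseq (size c2) Pc1 (etrans (endv_cons _ _ _ _) E1).
have [Pw2 Ew2] := closed_path_flatten_nseq (size c1) Pc2 (etrans (endv_cons _ _ _ _) E2).
set w1 := flatten _ in Pw1 Ew1; set w2 := flatten _ in Pw2 Ew2.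
have Hs1 : size w1 = (size c1 * size c2)%N by rewrite size_flatten_nseq mulnC.
have Hs2 : size w2 = (size c1 * size c2)%N by rewrite size_flatten_nseq.
have Hne : w1 != w2 by apply: contraNneq Hab => /(congr1 (head a)) /= ->.
case: hGK => d [N HN].
have [m [Hm0 HmN Hmexp]] := exists_pow2_gt_poly d N (muln_gt0 (size c1) (size c2)).
have Hpos : (0 < m * size w1)%N by rewrite Hs1 !muln_gt0 Hm0.
have := pow2_le_npaths Pw1 Ew1 Pw2 Ew2 (etrans Hs1 (esym Hs2)) Hne Hpos; rewrite Hs1 => Hpaths.
have Hsum : (npaths src tgt (m * (size c1 * size c2)) <=
    \sum_(i < (m * (size c1 * size c2)).+1) npaths src tgt i)%N.
  by rewrite (bigD1 ord_max) //= leq_addr.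
by have := HN _ HmN; lia.
Qed.

End Branching.

(** * Modules with one-dimensional components *)

Lemma QGr_iso_zero_of_dead (k : fieldType) (V A : finType) (src tgt : A -> V)
    (M : grmod k V A) (hM : is_grmod src tgt M) (b : forall j, car M j) (J : int) :
  (forall j, J <= j -> forall y : car M j, exists c : k, y = c *: b j) ->
  (forall D : int, exists2 j, D <= j & forall a, arr a (b j) = 0) ->
  QGr_iso (@zero_spred _ _ _ M) (@zero_spred _ _ _ (zero_grmod k V A)).
Proof.
move=> Hspan Hdead.
exists (fun _ _ => True), (fun _ _ => True), (fun j _ => 0); split => //.
- by split => //; move=> j x; exists 0%N; apply: killed_deg.
- by split => //; move=> j y _; exists 0%N; apply: killed_deg => i z _; apply: thinmx0.
- move=> j x _ _; have [j0 Hj0 Hb0] := Hdead (Posz (absz j + absz J)).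
  exists (absz (j0 - j)).+1 => m Hm v; apply: along_arrowsInto => s Hs.
  rewrite -(cat_take_drop (absz (j0 - j)) s); apply/along_cat.
  apply: along_deg => i y; rewrite size_take ifT; last by lia.
  have -> : j + Posz (absz (j0 - j)) = j0 by lia.
  move=> Ei; subst i; have [c ->] := Hspan j0 (ltac:(lia)) y.
  case Ed: (drop _ s) => [|a s2]; first by move: (size_drop (absz (j0 - j)) s); rewrite Ed /=; lia.
  by rewrite /= (arrZ hM) Hb0 scaler0; exact: (along_zero hM).
- by move=> j y; exists 0%N; apply: killed_deg => i z _; exists 0.
Qed.

Section Walk.
Variables (k : fieldType) (V A : finType) (src tgt : A -> V) (M : grmod k V A).
Hypothesis hM : is_grmod src tgt M.
Variables (b : forall j : int, car M j) (J : nat) (v0 : V) (a0 : A).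
Hypothesis b_neq0 : forall j : int, Posz J <= j -> b j != 0.
Hypothesis b_span : forall j : int, Posz J <= j -> forall y : car M j, exists c : k, y = c *: b j.
Hypothesis b_live : forall j : int, Posz J <= j -> exists a, arr a (b j) != 0.

Definition bcoord j (x : car M j) : k := epsilon (inhabits 0) (fun c : k => x = c *: b j).

Lemma bcoordP j (x : car M j) : Posz J <= j -> x = bcoord x *: b j.
Proof.
by move=> H; apply: (epsilon_spec (inhabits 0) (fun c : k => x = c *: b j)); apply: b_span.
Qed.

Lemma bcoord_eq j (x : car M j) c : Posz J <= j -> x = c *: b j -> bcoord x = c.
Proof.
move=> H E; apply/eqP; have /eqP := bcoordP x H.
by rewrite {1}E -subr_eq0 -scalerBl scaler_eq0 (negbTE (b_neq0 H)) orbF subr_eq0 eq_sym.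
Qed.

Lemma bcoordZ j c (x : car M j) : Posz J <= j -> bcoord (c *: x) = c * bcoord x.
Proof. by move=> H; apply: bcoord_eq => //; rewrite -scalerA -bcoordP. Qed.

Lemma bcoordD j c (x y : car M j) : Posz J <= j -> bcoord (c *: x + y) = c * bcoord x + bcoord y.
Proof. by move=> H; apply: bcoord_eq => //; rewrite scalerDl -scalerA -!bcoordP. Qed.

Lemma bcoord0 j : Posz J <= j -> bcoord (0 : car M j) = 0.
Proof. by move=> H; apply: bcoord_eq => //; rewrite scale0r. Qed.

Lemma bcoord_b j : Posz J <= j -> bcoord (b j) = 1.
Proof. by move=> H; apply: bcoord_eq => //; rewrite scale1r. Qed.

Lemma exists_vert j : Posz J <= j -> exists v, ide v (b j) = b j.
Proof.
move=> H; have [v Hv] : exists v, ide v (b j) != 0.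
  apply: NNPP => Hn; move/eqP: (b_neq0 H); apply.
  rewrite -(sum_ide hM (b j)) big1 // => v _.
  by apply/eqP; apply: contraT => Hv; case: (Hn (ex_intro _ v Hv)).
have [c Hc] := b_span H (ide v (b j)).
have Hc0 : c != 0 by apply: contraNneq Hv => c0; rewrite Hc c0 scale0r.
have Ecc : (c * c) *: b j = c *: b j.
  by rewrite -scalerA -Hc -(ideZ hM) -Hc (ide_ide hM) eqxx.
have Ec : c * c = c * 1.
  move/eqP: Ecc; rewrite -subr_eq0 -scalerBl scaler_eq0 (negbTE (b_neq0 H)) orbF.
  by rewrite subr_eq0 mulr1 => /eqP.
by exists v; rewrite Hc (mulfI Hc0 Ec) scale1r.
Qed.

Definition vert (j : int) : V := epsilon (inhabits v0) (fun v => ide v (b j) = b j).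

Lemma ide_vert_b j : Posz J <= j -> ide (vert j) (b j) = b j.
Proof.
by move=> H; apply: (epsilon_spec (inhabits v0) (fun v => ide v (b j) = b j)); apply: exists_vert.
Qed.

Lemma ide_vert j (x : car M j) : Posz J <= j -> ide (vert j) x = x.
Proof. by move=> H; rewrite (bcoordP x H) (ideZ hM) ide_vert_b. Qed.

Lemma ide_neq_vert j (x : car M j) u : Posz J <= j -> u != vert j -> ide u x = 0.
Proof.
move=> H Hu; rewrite (bcoordP x H) (ideZ hM) -(ide_vert_b H) (ide_ide hM).
by rewrite eq_sym (negbTE Hu) scaler0.
Qed.

Definition step (j : int) : A := epsilon (inhabits a0) (fun a => arr a (b j) != 0).

Lemma arr_step_neq0 j : Posz J <= j -> arr (step j) (b j) != 0.
Proof.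
by move=> H; apply: (epsilon_spec (inhabits a0) (fun a => arr a (b j) != 0)); apply: b_live.
Qed.

Lemma src_arr_neq0 j a : Posz J <= j -> arr a (b j) != 0 -> src a = vert j.
Proof.
move=> H; apply: contraNeq => Hs.
by rewrite (arr_ide hM) (ide_neq_vert _ H Hs) (arr0 hM).
Qed.

Lemma tgt_arr_neq0 j a : Posz J <= j -> arr a (b j) != 0 -> tgt a = vert (j + 1).
Proof.
move=> H; apply: contraNeq => Ht.
have := ide_arr hM a (tgt a) (b j); rewrite eqxx => <-.
by rewrite (ide_neq_vert _ _ Ht) //; lia.
Qed.

Lemma arr_eq0 j a (x : car M j) : Posz J <= j -> arr a (b j) = 0 -> arr a x = 0.
Proof. by move=> H Ha; rewrite (bcoordP x H) (arrZ hM) Ha scaler0. Qed.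

Definition wvert (t : nat) := vert (Posz t).
Definition warrow (t : nat) := step (Posz t).

Lemma src_warrow t : (J <= t)%N -> src (warrow t) = wvert t.
Proof. by move=> H; apply: src_arr_neq0; [|apply: arr_step_neq0]; lia. Qed.

Lemma tgt_warrow t : (J <= t)%N -> tgt (warrow t) = wvert t.+1.
Proof.
move=> H; rewrite /wvert (tgt_arr_neq0 (j := Posz t)); last (apply: arr_step_neq0); try lia.
by congr vert; lia.
Qed.

Lemma path_from_warrows t n : (J <= t)%N ->
  path_from src tgt (wvert t) (mkseq (fun i => warrow (t + i)) n) /\
  endv tgt (wvert t) (mkseq (fun i => warrow (t + i)) n) = wvert (t + n).
Proof.
move=> H; elim: n => [|n [Hs Es]]; first by rewrite addn0.
rewrite mkseqS path_from_rcons endv_rcons Hs src_warrow; last by lia.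
by rewrite Es eqxx tgt_warrow ?addnS //; lia.
Qed.

Definition recurrent v := forall D : nat, exists2 t, (D <= t)%N & wvert t = v.

Lemma eventually_recurrent :
  exists2 D : nat, (J <= D)%N & forall t, (D <= t)%N -> recurrent (wvert t).
Proof.
suff [D HJ HD] : exists2 D, (J <= D)%N &
    forall t, (D <= t)%N -> wvert t \in enum V -> recurrent (wvert t).
  by exists D => // t Ht; apply: HD; rewrite ?mem_enum.
elim: (enum V) => [|v l [D HJ HD]]; first by exists J.
case: (classic (recurrent v)) => Hv.
  by exists D => // t Ht; rewrite inE => /orP[/eqP -> | /(HD t Ht)].
have [D' HD'] : exists D', forall t, (D' <= t)%N -> wvert t != v.
  apply: NNPP => Hn; apply: Hv => D0; apply: NNPP => Hn2; apply: Hn.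
  by exists D0 => t Ht; apply/eqP => E; apply: Hn2; exists t.
exists (maxn D D') => [|t Ht]; first by lia.
rewrite inE => /orP[/eqP E | Hl]; last by apply: HD => //; lia.
by move: (HD' t (ltac:(lia))); rewrite E eqxx.
Qed.

End Walk.

Section Periodic.
Variables (k : fieldType) (V A : finType) (src tgt : A -> V) (M : grmod k V A).
Hypothesis hM : is_grmod src tgt M.
Hypothesis hGK : finite_GKdim src tgt.
Variables (b : forall j : int, car M j) (J : nat) (v0 : V) (a0 : A).
Hypothesis b_neq0 : forall j : int, Posz J <= j -> b j != 0.
Hypothesis b_span : forall j : int, Posz J <= j -> forall y : car M j, exists c : k, y = c *: b j.
Hypothesis b_live : forall j : int, Posz J <= j -> exists a, arr a (b j) != 0.
Variable D : nat.
Hypothesis JD : (J <= D)%N.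
Hypothesis D_recurrent : forall t, (D <= t)%N -> recurrent b v0 (wvert b v0 t).

Local Notation wvert := (wvert b v0).
Local Notation warrow := (warrow b a0).
Local Notation vert := (vert b v0).
Local Notation bcoord := (bcoord b).
Local Notation src_warrow := (src_warrow hM v0 a0 b_neq0 b_span b_live).
Local Notation tgt_warrow := (tgt_warrow hM v0 a0 b_neq0 b_span b_live).
Local Notation path_from_warrows := (path_from_warrows hM v0 a0 b_neq0 b_span b_live).
Local Notation src_arr_neq0 := (src_arr_neq0 hM v0 b_neq0 b_span).
Local Notation tgt_arr_neq0 := (tgt_arr_neq0 hM v0 b_neq0 b_span).

Lemma return_path t : (D <= t)%N ->
  exists2 s, path_from src tgt (wvert t.+1) s & endv tgt (wvert t.+1) s = wvert t.
Proof.
move=> H; have [t' Ht' Et'] := D_recurrent H t.+1.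
have [Hs Es] := path_from_warrows (t' - t.+1) (ltac:(lia) : (J <= t.+1)%N).
by exists (mkseq (fun i => warrow (t.+1 + i)) (t' - t.+1)); rewrite // Es subnKC.
Qed.

Lemma warrow_unique t a : (D <= t)%N -> arr a (b t) != 0 -> a = warrow t.
Proof.
move=> H Hn; apply/eqP/negPn/negP => Hne; have [s Hs Es] := return_path H.
have HJ : Posz J <= Posz t by lia.
have Ht1 : tgt a = wvert t.+1.
  by rewrite (tgt_arr_neq0 HJ Hn); congr vert; lia.
apply: (no_branching hGK (u := wvert t) Hne).
- exact: (src_arr_neq0 HJ Hn).
- by apply: src_warrow; lia.
- by rewrite Ht1; exact: Hs.
- by rewrite Ht1; exact: Es.
- by rewrite tgt_warrow //; lia.
- by rewrite tgt_warrow //; lia.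
Qed.

Lemma warrow_eq t t' : (D <= t)%N -> (D <= t')%N -> wvert t = wvert t' -> warrow t = warrow t'.
Proof.
move=> H H' E; apply/eqP/negPn/negP => Hne.
have [s Hs Es] := return_path H; have [s' Hs' Es'] := return_path H'.
apply: (no_branching hGK (u := wvert t) Hne).
- by apply: src_warrow; lia.
- by rewrite E; apply: src_warrow; lia.
- by rewrite tgt_warrow //; lia.
- by rewrite tgt_warrow //; lia.
- by rewrite tgt_warrow //; lia.
- by rewrite tgt_warrow ?E //; lia.
Qed.

Lemma wvert_addn_eq t t' e : (D <= t)%N -> (D <= t')%N ->
  wvert t = wvert t' -> wvert (t + e) = wvert (t' + e).
Proof.
move=> H H' E; elim: e => [|e IH]; first by rewrite !addn0.
rewrite !addnS -!tgt_warrow ?(@warrow_eq (t + e) (t' + e)) //; lia.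
Qed.

Lemma exists_period : exists n, (0 < n)%N && (wvert (D + n) == wvert D).
Proof.
have [t' Ht' Et'] := D_recurrent (leqnn D) D.+1.
exists (t' - D)%N; rewrite subnKC; last by lia.
by rewrite Et' eqxx andbT; lia.
Qed.

Definition period := ex_minn exists_period.

Lemma periodP : [/\ (0 < period)%N, wvert (D + period) = wvert D &
  forall n, (0 < n)%N -> wvert (D + n) = wvert D -> (period <= n)%N].
Proof.
rewrite /period; case: ex_minnP => m /andP[Hm /eqP Em] Hmin; split => //.
by move=> n Hn En; apply: Hmin; rewrite Hn En eqxx.
Qed.

Lemma period_gt0 : (0 < period)%N. Proof. by case: periodP. Qed.

Lemma wvert_add_period t q : (D <= t)%N -> wvert (t + period * q) = wvert t.
Proof.
move=> H; elim: q => [|q IH]; first by rewrite muln0 addn0.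
case: periodP => _ Ep _; rewrite -IH.
have := wvert_addn_eq (t - D + period * q) (leq_addr period D) (leqnn D) Ep.
have -> : (D + period + (t - D + period * q) = t + period * q.+1)%N by rewrite mulnS; lia.
by have -> : (D + (t - D + period * q) = t + period * q)%N by lia.
Qed.

Lemma wvert_add_neq t n : (D <= t)%N -> (0 < n < period)%N -> wvert (t + n) != wvert t.
Proof.
move=> H /andP[Hn Hnp]; apply/eqP => E.
pose e := (t - D)%N; pose s := (period * e.+1 - e)%N.
have He : (e.+1 <= period * e.+1)%N by rewrite leq_pmull // period_gt0.
have := wvert_addn_eq s (ltac:(lia) : (D <= t + n)%N) H E.
have -> : (t + n + s = (D + n) + period * e.+1)%N by rewrite /s /e; lia.
have -> : (t + s = D + period * e.+1)%N by rewrite /s /e; lia.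
rewrite !wvert_add_period; try lia.
by case: periodP => _ _ /(_ n Hn) Hmin /Hmin; lia.
Qed.

(* A multiple of the period, so that the walk is at phase [t %% period] of [loop_path] at [t]. *)
Definition start := (period * D)%N.

Lemma D_le_start : (D <= start)%N.
Proof. by rewrite /start leq_pmull // period_gt0. Qed.

Definition loop_vertex := wvert start.
Definition loop_path := mkseq (fun i => warrow (start + i)) period.

Lemma size_loop_path : size loop_path = period.
Proof. by rewrite size_mkseq. Qed.

Lemma warrow_add_mod t e : (D <= t)%N -> warrow (t + e) = warrow (t + e %% period).
Proof.
move=> H; apply: warrow_eq; try lia.
have <- : (t + e %% period + period * (e %/ period) = t + e)%N.
  by rewrite mulnC -addnA [(e %% period + _)%N]addnC -divn_eq.
by rewrite wvert_add_period //; lia.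
Qed.

Lemma warrow_cycle d : (start <= d)%N -> warrow d = cycle_arrow a0 loop_path d.
Proof.
move=> H; rewrite /cycle_arrow size_loop_path nth_mkseq ?ltn_pmod ?period_gt0 //.
have -> : d = (start + (d - start))%N by lia.
rewrite warrow_add_mod; last by have := D_le_start; lia.
by rewrite /start [(period * D)%N]mulnC modnMDl.
Qed.

Lemma wvert_cycle d : (start <= d)%N -> wvert d = src (cycle_arrow a0 loop_path d).
Proof. by move=> H; rewrite -warrow_cycle // src_warrow //; have := D_le_start; lia. Qed.

Lemma loop_path_closed :
  path_from src tgt loop_vertex loop_path /\ endv tgt loop_vertex loop_path = loop_vertex.
Proof.
have [-> ->] := path_from_warrows period (ltac:(have := D_le_start; lia) : (J <= start)%N).
by split=> //; have := wvert_add_period 1 D_le_start; rewrite muln1.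
Qed.

Lemma simple_loop_path : simple_cycle src tgt loop_vertex loop_path.
Proof.
have [Hp Ep] := loop_path_closed; have D_le := D_le_start.
apply/and4P; split; rewrite ?validFromE ?Hp ?Ep //.
  by rewrite -size_eq0 size_loop_path -lt0n period_gt0.
rewrite /loop_path /mkseq -map_comp; apply/(uniqP (src a0)) => i i'.
rewrite size_map size_iota !inE => Hi Hi'; rewrite !(nth_map 0%N) ?size_iota //= !nth_iota //.
rewrite !add0n !src_warrow; try lia.
have neq i1 i2 : (i1 < i2 < period)%N -> wvert (start + i1) != wvert (start + i2).
  move=> Hi12; rewrite eq_sym.
  have := wvert_add_neq (t := (start + i1)%N) (n := (i2 - i1)%N) (ltac:(lia)) (ltac:(lia)).
  by rewrite -addnA subnKC //; lia.
move=> E; case: (ltngtP i i') => // Hlt; exfalso.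
- by move: (neq i i' (ltac:(lia))); rewrite E eqxx.
- by move: (neq i' i (ltac:(lia))); rewrite E eqxx.
Qed.

Lemma loop_path_neq0 : (0 < size loop_path)%N.
Proof. by rewrite size_loop_path period_gt0. Qed.

Local Notation p_path := loop_path_closed.1.
Local Notation p_closed := loop_path_closed.2.
Local Notation E := (ekQ k src tgt loop_vertex).
Local Notation prefix := (cycle_prefix a0 loop_path).
Local Notation arrow := (cycle_arrow a0 loop_path).
Local Notation Ow := (O_ideal (k := k) (src := src) (tgt := tgt) (w := loop_vertex) loop_path).
Local Notation step := (step b a0).
Local Notation O_ideal_subP := (O_ideal_subP a0 loop_path_neq0 p_path p_closed).
Local Notation coef_ide_prefix := (coef_ide_prefix a0 loop_path_neq0 p_path p_closed).
Local Notation coef_arr_prefixS := (coef_arr_prefixS a0 loop_path_neq0 p_path p_closed).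

Lemma vert_cycle j : Posz start <= j -> vert j = src (arrow (absz j)).
Proof. by case: j => [d|d] H; [apply: wvert_cycle; lia | lia]. Qed.

Lemma step_cycle j : Posz start <= j -> step j = arrow (absz j).
Proof. by case: j => [d|d] H; [apply: warrow_cycle; lia | lia]. Qed.

Lemma arr_neq_step j a (x : car M j) : Posz start <= j -> a != step j -> arr a x = 0.
Proof.
case: j x => [d|d] x H Ha; last by lia.
apply: (arr_eq0 hM b_span); first by have := D_le_start; lia.
apply/eqP; apply: contraNT Ha => Hn.
by apply/eqP; apply: (warrow_unique (t := d)) => //; have := D_le_start; lia.
Qed.

Definition weight (j : int) : k := bcoord (arr (step j) (b j)).

Lemma weight_neq0 j : Posz J <= j -> weight j != 0.
Proof.
move=> H; apply: contraNneq (arr_step_neq0 a0 b_live H) => E.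
by rewrite (bcoordP b_span (arr (step j) (b j))) ?[bcoord _]E ?scale0r //; lia.
Qed.

(* [scale j] is the inverse of [weight start * ... * weight (j - 1)], which makes [phi] below
   commute with the arrows of the walk. *)
Fixpoint scale_from (n : nat) : k :=
  if n is n'.+1 then scale_from n' / weight (Posz (start + n')) else 1.

Definition scale (j : int) : k := scale_from (absz (j - Posz start)%R).

Lemma scale_neq0 j : scale j != 0.
Proof.
rewrite /scale; elim: (absz _) => [|n IH] /=; first exact: oner_neq0.
by rewrite mulf_neq0 // invr_eq0 weight_neq0 //; have := D_le_start; lia.
Qed.

Lemma scale_step j : Posz start <= j -> scale (j + 1) * weight j = scale j.
Proof.
move=> H; rewrite /scale.
have -> : absz (j + 1 - Posz start)%R = (absz (j - Posz start)%R).+1 by lia.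
rewrite [scale_from _.+1]/=.
have -> : Posz (start + absz (j - Posz start)%R) = j by lia.
by rewrite mulfVK // weight_neq0 //; have := D_le_start; lia.
Qed.

Definition phi j (x : car M j) : car E j :=
  if Posz start <= j then (bcoord x * scale j) *: cycle_elt k src tgt loop_vertex a0 loop_path j
  else 0.

Lemma coef_phi j (x : car M j) l :
  coef (phi x) (prefix l) = if (Posz start <= j) && (Posz l == j) then bcoord x * scale j else 0.
Proof.
rewrite /phi; case: ifP => H /=; last by rewrite ecoef0.
rewrite ecoefZ (coef_cycle_elt k a0 loop_path_neq0 p_path p_closed).
by case: eqP; rewrite ?mulr1 ?mulr0.
Qed.

Lemma phi0 j : phi (0 : car M j) = 0.
Proof.
rewrite /phi; case: ifP => H //.
by rewrite (bcoord0 b_neq0 b_span) ?mul0r ?scale0r //; have := D_le_start; lia.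
Qed.

Definition tail j (x : car M j) : Prop := Posz start <= j \/ x = 0.

Lemma tail0 j (x : car M j) : tail x -> ~~ (Posz start <= j) -> x = 0.
Proof. by case=> [->|]. Qed.

Lemma tail_submod : submod tail.
Proof.
split.
- by move=> j; right.
- move=> j c x y Hx Hy; case: (boolP (Posz start <= j)) => H; first by left.
  by right; rewrite (tail0 Hx H) (tail0 Hy H) scaler0 addr0.
- by move=> v j x [H|->]; [left | right; rewrite (ide0 hM)].
- by move=> a j x [H|->]; [left; lia | right; rewrite (arr0 hM)].
Qed.

Lemma phi_linear j (c : k) (x y : car M j) : Ow (phi (c *: x + y) - (c *: phi x + phi y)).
Proof.
apply/O_ideal_subP => l; rewrite ecoefD !coef_phi.
case: ifP => [/andP[H _]|_]; last by rewrite mulr0 addr0.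
by rewrite (bcoordD b_neq0 b_span) ?mulrDl ?mulrA //; have := D_le_start; lia.
Qed.

Lemma phi_ide v j (x : car M j) : Ow (phi (ide v x) - ide v (phi x)).
Proof.
have D_le := D_le_start.
apply/O_ideal_subP => l; rewrite coef_ide_prefix !coef_phi.
case: (boolP ((Posz start <= j) && (Posz l == j))) => [/andP[H /eqP El] | _];
  last by rewrite if_same.
have -> : l = absz j by lia.
rewrite -vert_cycle //; case: (eqVneq (vert j) v) => [<-|Hv].
  by rewrite (ide_vert hM v0 b_neq0 b_span) //; lia.
rewrite (ide_neq_vert hM (v0 := v0) b_neq0 b_span) ?(bcoord0 b_neq0 b_span) ?mul0r //.
all: by rewrite 1?eq_sym //; lia.
Qed.

Lemma phi_arr a j (x : car M j) : tail x -> Ow (phi (arr a x) - arr a (phi x)).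
Proof.
move=> Hx; apply/O_ideal_subP => l; case: (boolP (Posz start <= j)) => Hj; last first.
  by rewrite (tail0 Hx Hj) (arr0 hM) !phi0 ekQ_arr0.
rewrite coef_phi; case: l => [|l]; first by rewrite coef_arr_prefix0 andbC; case: eqP => //; lia.
rewrite coef_arr_prefixS coef_phi.
case: (eqVneq (Posz l) j) => [El|Nl]; last first.
  have -> : (Posz l.+1 == j + 1) = false by apply/eqP; lia.
  by rewrite !andbF if_same.
subst j; have D_le := D_le_start.
have -> : (Posz start <= Posz l + 1) && (Posz l.+1 == Posz l + 1) by apply/andP; split; lia.
rewrite Hj -(step_cycle Hj) /=.
case: (eqVneq (step l) a) => [<-|Ha]; last first.
  by rewrite (arr_neq_step x Hj) 1?eq_sym // (bcoord0 b_neq0 b_span) ?mul0r //; lia.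
rewrite {1}(bcoordP b_span x) ?(arrZ hM) ?(bcoordZ b_neq0 b_span); try lia.
by rewrite -/(weight l) -mulrA [weight _ * _]mulrC scale_step.
Qed.

Lemma phi_ker j (x : car M j) : tail x -> Ow (phi x) -> x = 0.
Proof.
move=> Hx /(O_idealP a0 loop_path_neq0 p_path p_closed) /(_ (absz j)).
case: (boolP (Posz start <= j)) => Hj; last by rewrite (tail0 Hx Hj).
rewrite coef_phi Hj /=; have -> : (Posz (absz j) == j) by apply/eqP; lia.
move/eqP; rewrite mulf_eq0 (negbTE (scale_neq0 j)) orbF => /eqP Hc.
by rewrite (bcoordP b_span x) ?Hc ?scale0r //; have := D_le_start; lia.
Qed.

Lemma phi_onto j (z : car E j) : Posz start <= j ->
  Ow (z - phi ((coef z (prefix (absz j)) / scale j) *: b j)).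
Proof.
move=> Hj; have D_le := D_le_start; apply/O_ideal_subP => l.
rewrite coef_phi Hj /=; case: (eqVneq (Posz l) j) => [El|Nl].
  rewrite (bcoordZ b_neq0 b_span) ?(bcoord_b b_neq0 b_span) ?mulr1 ?divfK ?scale_neq0; try lia.
  by have -> : absz j = l by lia.
case: (coef z (prefix l) =P 0) => // /eqP /coef_supp /andP[/eqP].
by rewrite size_cycle_prefix => El; rewrite El eqxx in Nl.
Qed.

Lemma tail_cofinal j (x : car M j) : exists n, killed tail n x.
Proof. by exists (absz (Posz start - j)); apply: killed_deg => i y Hi; left; lia. Qed.

Lemma QGr_iso_cycle : QGr_iso (@zero_spred _ _ _ M) Ow.
Proof.
have Osub := O_ideal_submod k a0 loop_path_neq0 p_path p_closed.
exists tail, Ow, phi; split.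
- by split; [exact: tail_submod | move=> j x ->; right | exact: tail_cofinal].
- by split=> // j y Hy; exists 0%N; apply: submod_killed.
- split=> [j c x y _ _ | v j x _ | a j x | j x ->]; first exact: phi_linear.
  + exact: phi_ide.
  + exact: phi_arr.
  + by rewrite phi0; case: Osub.
- move=> j x Hx /(phi_ker Hx) ->.
  by exists 0%N; apply: (submod_killed (zero_submod hM)).
- move=> j y; exists (absz (Posz start - j)); apply: killed_deg => i z Hi.
  by eexists; split; [left | apply: phi_onto]; lia.
Qed.

End Periodic.

Lemma exists_spanning_family (k : fieldType) (V A : finType) (M : grmod k V A) :
  (exists J : int, forall j : int, J <= j ->
     exists x : car M j, x != 0 /\ forall y : car M j, exists c : k, y = c *: x) ->
  exists (b : forall j, car M j) (J : nat),
    (forall j : int, Posz J <= j -> b j != 0) /\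
    (forall j : int, Posz J <= j -> forall y : car M j, exists c : k, y = c *: b j).
Proof.
move=> [J0 HJ0].
have [b Hb] : exists b : forall j, car M j, forall j, J0 <= j ->
    b j != 0 /\ forall y : car M j, exists c : k, y = c *: b j.
  have Hex j : exists x : car M j, J0 <= j ->
      x != 0 /\ forall y : car M j, exists c : k, y = c *: x.
    by case: (boolP (J0 <= j)) => H; [have [x Hx] := HJ0 j H; exists x | exists 0].
  exists (fun j => proj1_sig (constructive_indefinite_description _ (Hex j))) => j.
  exact: proj2_sig (constructive_indefinite_description _ (Hex j)).
by exists b, (absz J0); split=> j Hj; have /(Hb j)[] : J0 <= j by lia.
Qed.

Lemma eventually_live (k : fieldType) (V A : finType) (src tgt : A -> V)
    (M : grmod k V A) (hM : is_grmod src tgt M) (b : forall j, car M j) (J : nat) :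
  (forall j : int, Posz J <= j -> forall y : car M j, exists c : k, y = c *: b j) ->
  ~ QGr_iso (@zero_spred _ _ _ M) (@zero_spred _ _ _ (zero_grmod k V A)) ->
  exists2 J1 : nat, (J <= J1)%N & forall j : int, Posz J1 <= j -> exists a, arr a (b j) != 0.
Proof.
move=> b_span Hnt; apply: NNPP => Hlive; apply/Hnt/(QGr_iso_zero_of_dead hM b_span) => D.
apply: NNPP => Hdead; apply: Hlive; exists (maxn J (absz D)) => [|j Hj]; first by lia.
apply: NNPP => Hj'; apply: Hdead; exists j; first by lia.
by move=> a; apply/eqP/negPn/negP => Ha; apply: Hj'; exists a.
Qed.

Theorem proposition5p6 (k : fieldType) (V A : finType) (src tgt : A -> V)
  (hGK : finite_GKdim src tgt)
  (M : grmod k V A) (hM : is_grmod src tgt M)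
  (hdim : exists J : int, forall j : int, J <= j ->
     exists x : car M j, x != 0 /\ forall y : car M j, exists c : k, y = c *: x) :
  ~ QGr_iso (@zero_spred _ _ _ M) (@zero_spred _ _ _ (zero_grmod k V A))
  <->
  exists (w : V) (p : seq A),
    simple_cycle src tgt w p /\
    QGr_iso (@zero_spred _ _ _ M) (O_ideal (src := src) (tgt := tgt) (w := w) p).
Proof.
split=> [Hnt | [w [p [Hp Hiso]]]]; last exact: (QGr_iso_cycle_not_torsion hM Hp Hiso).
have [b [J [b_neq0 b_span]]] := exists_spanning_family hdim.
have [J1 JJ1 b_live] := eventually_live hM b_span Hnt.
have b_neq1 j : Posz J1 <= j -> b j != 0 by move=> Hj; apply: b_neq0; lia.
have b_span1 j : Posz J1 <= j -> forall y : car M j, exists c : k, y = c *: b j.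
  by move=> Hj; apply: b_span; lia.
have [a0 _] := b_live J1 (lexx _).
have [D JD D_rec] := eventually_recurrent b J1 (src a0).
exists (loop_vertex JD D_rec), (loop_path a0 JD D_rec); split.
- exact: (simple_loop_path hM hGK a0 b_neq1 b_span1 b_live).
- exact: (QGr_iso_cycle hM hGK a0 b_neq1 b_span1 b_live).
Qed.
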